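(* For all $X,Y\in{\sf Frm_2}$: if the sequent $\Rightarrow X\vee Y$ (empty antecedent) is derivable in ${\sf GWF^s_{N_2}}$, then $\Rightarrow X$ is derivable in ${\sf GWF^s_{N_2}}$ or $\Rightarrow Y$ is derivable in ${\sf GWF^s_{N_2}}$.
   Context: Language: countably many atoms $p,q,\dots$, the constant $\bot$, and binary connectives $\wedge,\vee,\rightarrow$ ($\rightarrow$ is strict implication). ${\sf Frm}$ is the set of formulas built from atoms and $\bot$ with $\wedge,\vee,\rightarrow$; $A,B,C,D$ range over ${\sf Frm}$. Let $\supset$ be a new binary symbol (material implication) and ${\sf Frm_1}={\sf Frm}\cup\{A\supset B : A,B\in{\sf Frm}\}$ (no nesting of $\supset$). ${\sf Frm_2}$ is the smallest set containing ${\sf Frm_1}$ and closed under $\wedge$ and $\vee$; $X,Y,Z$ range over ${\sf Frm_2}$. A single-succedent sequent is $\Gamma\Rightarrow Z$ with $\Gamma$ a finite multiset of ${\sf Frm_2}$-formulas and $Z\in{\sf Frm_2}$. The calculus ${\sf GWF^s_{N_2}}$ has initial sequents $(id^s)$ $p,\Gamma\Rightarrow p$ ($p$ an atom) and $(L^s_\bot)$ $\bot,\Gamma\Rightarrow Z$, and rules (premises / conclusion): $(L^s_\wedge)$ $X,Y,\Gamma\Rightarrow Z$ / $X\wedge Y,\Gamma\Rightarrow Z$; $(R^s_\wedge)$ $\Gamma\Rightarrow X$ and $\Gamma\Rightarrow Y$ / $\Gamma\Rightarrow X\wedge Y$; $(L^s_\vee)$ $X,\Gamma\Rightarrow Z$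 and $Y,\Gamma\Rightarrow Z$ / $X\vee Y,\Gamma\Rightarrow Z$; $(R^s_{\vee_l})$ $\Gamma\Rightarrow X$ / $\Gamma\Rightarrow X\vee Y$; $(R^s_{\vee_r})$ $\Gamma\Rightarrow Y$ / $\Gamma\Rightarrow X\vee Y$; $(L^s_\supset)$ $A\supset B,\Gamma\Rightarrow A$ and $B,\Gamma\Rightarrow Z$ / $A\supset B,\Gamma\Rightarrow Z$; $(R^s_\supset)$ $A,\Gamma\Rightarrow B$ / $\Gamma\Rightarrow A\supset B$; $(LR^s_\rightarrow)$ $C\supset D,A\Rightarrow B$ / $\Gamma,C\rightarrow D\Rightarrow A\rightarrow B$; $(R^s_\rightarrow)$ $A\Rightarrow B$ / $\Gamma\Rightarrow A\rightarrow B$. Here $A,B,C,D\in{\sf Frm}$, $X,Y,Z\in{\sf Frm_2}$, $\Gamma$ an arbitrary finite multiset of ${\sf Frm_2}$-formulas. *)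

From Stdlib Require Import List Permutation.
Import ListNotations.

(* Frm and Frm2 are carved out by predicates,
   so that Frm is literally a subset of Frm2 as in the paper. *)
Inductive form : Type :=
| Atom : nat -> form
| Bot : form
| And : form -> form -> form
| Or : form -> form -> form
| SImp : form -> form -> form
| MImp : form -> form -> form.

Fixpoint isFrm (f : form) : Prop :=
  match f with
  | Atom _ | Bot => True
  | And a b | Or a b | SImp a b => isFrm a /\ isFrm b
  | MImp _ _ => False
  end.

Definition isFrm1 (f : form) : Prop :=
  isFrm f \/ exists a b, f = MImp a b /\ isFrm a /\ isFrm b.

Inductive isFrm2 : form -> Prop :=
| Frm2_base : forall f, isFrm1 f -> isFrm2 f
| Frm2_and : forall x y, isFrm2 x -> isFrm2 y -> isFrm2 (And x y)
| Frm2_or : forall x y, isFrm2 x -> isFrm2 y -> isFrm2 (Or x y).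

Definition Frm2ctx (G : list form) : Prop := Forall isFrm2 G.

(* Antecedents are finite multisets, represented
   as lists up to permutation: a rule conclusion [G'] with principal formula
   [P] and context [G] is written with the side condition [Permutation G' (P :: G)]. *)
Inductive derivable : list form -> form -> Prop :=
| d_id : forall G G' p Z, Z = Atom p -> Permutation G' (Atom p :: G) ->
    Frm2ctx G -> derivable G' Z
| d_Lbot : forall G G' Z, Permutation G' (Bot :: G) ->
    Frm2ctx G -> isFrm2 Z -> derivable G' Z
| d_Land : forall G G' X Y Z, Permutation G' (And X Y :: G) ->
    derivable (X :: Y :: G) Z -> derivable G' Z
| d_Rand : forall G X Y,
    derivable G X -> derivable G Y -> derivable G (And X Y)
| d_Lor : forall G G' X Y Z, Permutation G' (Or X Y :: G) ->
    derivable (X :: G) Z -> derivable (Y :: G) Z -> derivable G' Z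
| d_Ror_l : forall G X Y, isFrm2 Y ->
    derivable G X -> derivable G (Or X Y)
| d_Ror_r : forall G X Y, isFrm2 X ->
    derivable G Y -> derivable G (Or X Y)
| d_Lmimp : forall G G' A B Z, Permutation G' (MImp A B :: G) ->
    isFrm A -> isFrm B ->
    derivable (MImp A B :: G) A -> derivable (B :: G) Z -> derivable G' Z
| d_Rmimp : forall G A B, isFrm A -> isFrm B ->
    derivable (A :: G) B -> derivable G (MImp A B)
| d_LRsimp : forall G G' A B C D, Permutation G' (SImp C D :: G) ->
    isFrm A -> isFrm B -> isFrm C -> isFrm D -> Frm2ctx G ->
    derivable [MImp C D; A] B -> derivable G' (SImp A B)
| d_Rsimp : forall G A B, isFrm A -> isFrm B -> Frm2ctx G ->
    derivable [A] B -> derivable G (SImp A B).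

From Stdlib Require Import List Permutation.
Import ListNotations.

(* Over an antecedent of atoms and strict implications no left rule except
   [LR_->] can fire, and neither [id^s] nor [LR_->] concludes a disjunction; so
   the last rule of a derivation of [G => X \/ Y] introduces the disjunction. *)

Definition left_inert (f : form) : Prop :=
  match f with
  | Atom _ | SImp _ _ => True
  | _ => False
  end.

Lemma left_inert_principal (G G' : list form) (P : form) :
  Forall left_inert G' -> Permutation G' (P :: G) -> left_inert P.
Proof.
  intros Hinert Hperm.
  apply (proj1 (Forall_forall _ _) Hinert).
  apply Permutation_in with (P :: G); [symmetry; exact Hperm | left; reflexivity].
Qed.

Lemma derivable_Or_inv (G : list form) (X Y : form) :
  Forall left_inert G -> derivable G (Or X Y) -> derivable G X \/ derivable G Y.
Proof.
  intros Hinert H.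
  inversion H; subst;
    try discriminate;
    try match goal with
        | Hp : Permutation G (_ :: _) |- _ =>
            destruct (left_inert_principal _ _ _ Hinert Hp)
        end;
    [left | right]; assumption.
Qed.

Theorem corollary5p4 : forall X Y : form, isFrm2 X -> isFrm2 Y ->
  derivable [] (Or X Y) -> derivable [] X \/ derivable [] Y.
Proof.
  intros X Y _ _.
  apply derivable_Or_inv, Forall_nil.
Qed.
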